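(* Let $h(x,t)=\phi(x,x_{cl}(t))\chi_{(-x_{cl}(t),x_{cl}(t))}(x)$ be a moving-contact-line solution with $\dot x_{cl}(t)\neq0$, such that $\int_{\mathbb{R}}h(x,t)\,\mathrm{d}x$ is constant in time and, on the interval $(-x_{cl}(t),x_{cl}(t))$, the equation $$\dot x_{cl}\,\frac{\partial\phi}{\partial s}(x,x_{cl})+\frac{\partial}{\partial x}\Big(\phi(x,x_{cl})\,m(\bar h)\,\partial_{xxx}\bar h\Big)=0$$ holds classically, with $\phi(\cdot,x_{cl})\,m(\bar h)\partial_{xxx}\bar h$ extending continuously to $[-x_{cl},x_{cl}]$. If $\phi(x_{cl}(t),x_{cl}(t))\neq0$, then $$\dot x_{cl}(t)=\Big[m(\bar h)\,\partial_{xxx}\bar h\Big]_{x=x_{cl}(t)} .$$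
   Context: Fix $\alpha,\gamma,\mu>0$. $K_2(x)=\frac{1}{4\alpha^2}(\alpha+|x|)e^{-|x|/\alpha}$ is the bi-Helmholtz kernel, $\bar h=K_2*h$, and $m(s)=\frac{\gamma}{3\mu}s^2$. A moving-contact-line solution has the form $h(x,t)=\phi(x,x_{cl}(t))\chi_{(-x_{cl},x_{cl})}(x)$ with $x_{cl}(t)>0$ differentiable, $\phi(x,s)$ continuously differentiable in $(x,s)$ for $|x|\le s$, smooth in $x$, and even in $x$; $\partial\phi/\partial s$ is the derivative in the second argument; $\chi_A$ is the indicator function of $A$. *)

From Stdlib Require Import Reals.
From Coquelicot Require Import Coquelicot.
Open Scope R_scope.

Definition K2 (alpha x : R) : R :=
  / (4 * alpha ^ 2) * (alpha + Rabs x) * exp (- Rabs x / alpha).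

Definition mob (gamma mu s : R) : R := gamma / (3 * mu) * s ^ 2.

Definition hsol (xcl : R -> R) (phi : R -> R -> R) (x t : R) : R :=
  if Rlt_dec (Rabs x) (xcl t) then phi x (xcl t) else 0.

Definition hbar (alpha : R) (xcl : R -> R) (phi : R -> R -> R) (x t : R) : R :=
  RInt_gen (fun y => K2 alpha (x - y) * hsol xcl phi y t)
    (Rbar_locally m_infty) (Rbar_locally p_infty).

Definition hbar_xxx (alpha : R) (xcl : R -> R) (phi : R -> R -> R) (x t : R) : R :=
  Derive_n (fun y => hbar alpha xcl phi y t) 3 x.

Definition mass (xcl : R -> R) (phi : R -> R -> R) (t : R) : R :=
  RInt_gen (fun x => hsol xcl phi x t) (Rbar_locally m_infty) (Rbar_locally p_infty).

Definition flux (alpha gamma mu : R) (xcl : R -> R) (phi : R -> R -> R) (x t : R) : R :=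
  phi x (xcl t) * mob gamma mu (hbar alpha xcl phi x t) * hbar_xxx alpha xcl phi x t.

Definition domD (p : R * R) : Prop := 0 < snd p /\ Rabs (fst p) <= snd p.

Definition cont_on_D (f : R -> R -> R) : Prop :=
  forall x s, domD (x, s) ->
    filterlim (fun p : R * R => f (fst p) (snd p))
      (within domD (locally (x, s))) (locally (f x s)).

Definition C1_on_D (phi : R -> R -> R) : Prop :=
  cont_on_D phi /\
  exists phix phis : R -> R -> R,
    cont_on_D phix /\ cont_on_D phis /\
    forall x s, 0 < s -> Rabs x < s ->
      is_derive (fun y => phi y s) x (phix x s) /\
      is_derive (fun r => phi x r) s (phis x s).

Definition smooth_in_x (phi : R -> R -> R) : Prop :=
  forall s x n, 0 < s -> Rabs x < s -> ex_derive_n (fun y => phi y s) n x.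

Definition even_in_x (phi : R -> R -> R) : Prop :=
  forall s x, 0 < s -> Rabs x <= s -> phi (- x) s = phi x s.

Definition in_I (a b : Rbar) (t : R) : Prop := Rbar_lt a t /\ Rbar_lt t b.

From Stdlib Require Import Reals Lra Lia ClassicalEpsilon.
From Coquelicot Require Import Coquelicot.
Open Scope R_scope.

(* Write [s = xcl t0], [F = phi m(hbar) d_xxx hbar] for the flux and [L0] for the
   integral of [d phi / d s] over [(-s, s)].  Since the contact line moves, [xcl]
   sweeps a right neighbourhood of [s], so conservation of the mass
   [int_{-r}^{r} phi(y, r) dy] forces its right derivative at [r = s] to vanish:
   [2 phi(s, s) + L0 = 0].  Integrating the equation over [(-s, s)] gives
   [F(s) - F(-s) = - xcl' L0 = 2 xcl' phi(s, s)].  The kernel [K2] and the film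
   are even, so [hbar] is even, [d_xxx hbar] is odd and so is [F]; hence
   [F(s) = xcl' phi(s, s)], and dividing by [phi(s, s) <> 0] gives the claim.
   The technical core is that [hbar] has three derivatives everywhere although
   the third derivative of [K2] jumps at 0: splitting the convolution at [y = x],
   both pieces are integrals of exponential polynomials that can be
   differentiated under the integral sign, and [K2] being C^2 kills the
   boundary terms. *)

Lemma continuous_of_eps_delta (f : R -> R) x :
  (forall eps, 0 < eps -> exists d, 0 < d /\
     forall y, Rabs (y - x) < d -> Rabs (f y - f x) < eps) ->
  continuous f x.
Proof.
  intros H. apply filterlim_locally. intros eps.
  destruct (H eps (cond_pos eps)) as [d [Hd Hy]].
  exists (mkposreal d Hd). intros y Hy'. apply Hy. exact Hy'.
Qed.

Lemma continuous_eps_delta (f : R -> R) x : continuous f x ->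
  forall eps, 0 < eps -> exists d, 0 < d /\
    forall y, Rabs (y - x) < d -> Rabs (f y - f x) < eps.
Proof.
  intros H eps He. apply filterlim_locally with (eps := mkposreal eps He) in H.
  destruct H as [d Hd]. exists d. split; [apply cond_pos|]. intros y Hy. apply (Hd y Hy).
Qed.

Lemma within_eps_delta (f : R -> R) (D : R -> Prop) x :
  filterlim f (within D (locally x)) (locally (f x)) ->
  forall eps, 0 < eps -> exists d, 0 < d /\
    forall y, Rabs (y - x) < d -> D y -> Rabs (f y - f x) < eps.
Proof.
  intros Hf eps He. apply filterlim_locally with (eps := mkposreal eps He) in Hf.
  destruct Hf as [d Hd]. exists d. split; [apply cond_pos|]. intros y H1 H2. apply (Hd y H1 H2).
Qed.

Lemma cont_on_D_eps_delta f x s : cont_on_D f -> domD (x, s) ->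
  forall eps, 0 < eps -> exists d, 0 < d /\ forall y r,
    Rabs (y - x) < d -> Rabs (r - s) < d -> domD (y, r) -> Rabs (f y r - f x s) < eps.
Proof.
  intros Hf HD eps He. specialize (Hf x s HD).
  apply filterlim_locally with (eps := mkposreal eps He) in Hf.
  destruct Hf as [d Hd]. exists d. split; [apply cond_pos|].
  intros y r H1 H2 H3. apply (Hd (y, r)); [split; assumption | exact H3].
Qed.

Lemma Rmin3_spec d1 d2 d3 : 0 < d1 -> 0 < d2 -> 0 < d3 ->
  0 < Rmin d1 (Rmin d2 d3) /\ Rmin d1 (Rmin d2 d3) <= d1 /\
  Rmin d1 (Rmin d2 d3) <= d2 /\ Rmin d1 (Rmin d2 d3) <= d3.
Proof.
  intros. pose proof (Rmin_l d1 (Rmin d2 d3)). pose proof (Rmin_r d1 (Rmin d2 d3)).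
  pose proof (Rmin_l d2 d3). pose proof (Rmin_r d2 d3).
  repeat split; try lra. repeat apply Rmin_pos; auto.
Qed.

Lemma Rabs_triang3 a b c : Rabs (a - b - c) <= Rabs a + Rabs b + Rabs c.
Proof. split_Rabs; lra. Qed.

Lemma eq0_of_arbitrarily_small X C : (forall eps, 0 < eps -> Rabs X <= C * eps) -> X = 0.
Proof.
  intros H. destruct (Req_dec X 0) as [|Hn]; auto. exfalso.
  assert (Hp : 0 < Rabs X) by (apply Rabs_pos_lt; auto).
  assert (HC : 0 < C) by (specialize (H 1 Rlt_0_1); lra).
  assert (Hle : Rabs X <= C * (Rabs X / (2 * C))) by (apply H; apply Rdiv_lt_0_compat; lra).
  replace (C * (Rabs X / (2 * C))) with (Rabs X / 2) in Hle by (field; lra). lra.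
Qed.

Definition clamp (a b y : R) := Rmax a (Rmin b y).

Lemma clamp_nonexpansive a b y z : Rabs (clamp a b y - clamp a b z) <= Rabs (y - z).
Proof. unfold clamp, Rmax, Rmin. repeat destruct Rle_dec; split_Rabs; lra. Qed.

Lemma clamp_in_seg a b y : a <= b -> a <= clamp a b y <= b.
Proof. intros. unfold clamp, Rmax, Rmin. repeat destruct Rle_dec; lra. Qed.

Lemma clamp_id a b y : a <= y <= b -> clamp a b y = y.
Proof. intros. unfold clamp, Rmax, Rmin. repeat destruct Rle_dec; lra. Qed.

Definition seg_continuous (f : R -> R) a b :=
  forall y, a <= y <= b -> forall eps, 0 < eps -> exists d, 0 < d /\
    forall z, a <= z <= b -> Rabs (z - y) < d -> Rabs (f z - f y) < eps.

Lemma continuous_clamp_comp f a b : a <= b -> seg_continuous f a b ->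
  forall y, continuous (fun z => f (clamp a b z)) y.
Proof.
  intros Hab Hw y. apply continuous_of_eps_delta. intros eps He.
  destruct (Hw (clamp a b y) (clamp_in_seg a b y Hab) eps He) as [d [Hd H]].
  exists d. split; auto. intros z Hz. apply H; [apply clamp_in_seg; auto|].
  eapply Rle_lt_trans; [apply clamp_nonexpansive | auto].
Qed.

Lemma continuous_bounded_on_seg (g : R -> R) a b : a <= b -> (forall y, continuous g y) ->
  exists M, forall y, a <= y <= b -> Rabs (g y) <= M.
Proof.
  intros Hab Hg.
  destruct (continuity_ab_maj (fun y => Rabs (g y)) a b Hab) as [Mx [HM _]].
  - intros c _. apply continuity_pt_filterlim.
    apply (continuous_comp g Rabs); [apply Hg | apply continuous_Rabs].
  - exists (Rabs (g Mx)). auto.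
Qed.

Lemma ex_RInt_seg_continuous f a b : a <= b -> seg_continuous f a b -> ex_RInt f a b.
Proof.
  intros Hab Hw. apply ex_RInt_ext with (fun z => f (clamp a b z)).
  - intros x Hx. rewrite Rmin_left, Rmax_right in Hx by lra. rewrite clamp_id; lra.
  - apply (@ex_RInt_continuous R_CompleteNormedModule). intros. apply continuous_clamp_comp; auto.
Qed.

Lemma seg_continuous_bounded f a b : a <= b -> seg_continuous f a b ->
  exists M, forall y, a <= y <= b -> Rabs (f y) <= M.
Proof.
  intros Hab Hw.
  destruct (continuous_bounded_on_seg _ a b Hab (continuous_clamp_comp f a b Hab Hw)) as [M HM].
  exists M. intros y Hy. specialize (HM y Hy). rewrite clamp_id in HM; auto.
Qed.

Lemma RInt_Chasles_R f a b c : ex_RInt f a b -> ex_RInt f b c ->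
  RInt f a b + RInt f b c = RInt f a c.
Proof. intros. apply (@RInt_Chasles R_CompleteNormedModule); auto. Qed.

Lemma RInt_minus_const (f : R -> R) a b c : ex_RInt f a b ->
  RInt (fun y => f y - c) a b = RInt f a b - (b - a) * c.
Proof.
  intros H. apply (@is_RInt_unique R_CompleteNormedModule).
  apply (@is_RInt_minus R_NormedModule f (fun _ => c)).
  - apply (@RInt_correct R_CompleteNormedModule); auto.
  - apply (@is_RInt_const R_NormedModule).
Qed.

Lemma RInt_minus_minus_scal f1 f2 f3 a b e :
  ex_RInt f1 a b -> ex_RInt f2 a b -> ex_RInt f3 a b ->
  RInt (fun y => f1 y - f2 y - e * f3 y) a b = RInt f1 a b - RInt f2 a b - e * RInt f3 a b.
Proof.
  intros H1 H2 H3. apply (@is_RInt_unique R_CompleteNormedModule).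
  apply (@is_RInt_minus R_NormedModule (fun y => f1 y - f2 y) (fun y => e * f3 y)).
  - apply (@is_RInt_minus R_NormedModule); apply (@RInt_correct R_CompleteNormedModule); auto.
  - apply (@is_RInt_scal R_NormedModule). apply (@RInt_correct R_CompleteNormedModule); auto.
Qed.

Lemma ex_RInt_subseg (f : R -> R) L a b :
  ex_RInt f (-L) L -> Rabs a <= L -> Rabs b <= L -> ex_RInt f a b.
Proof.
  intros H Ha Hb.
  assert (Hle : forall u v, u <= v -> Rabs u <= L -> Rabs v <= L -> ex_RInt f u v).
  { intros u v Huv Hu Hv. apply (@ex_RInt_Chasles_1 R_CompleteNormedModule) with L.
    - split_Rabs; lra.
    - apply (@ex_RInt_Chasles_2 R_CompleteNormedModule) with (-L); auto. split_Rabs; lra. }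
  destruct (Rle_dec a b); [auto | apply ex_RInt_swap; apply Hle; auto; lra].
Qed.

(* Unlike [abs_RInt_le_const], the bound is only required on the open interval,
   so that it applies to integrands with jumps at the endpoints. *)
Lemma abs_RInt_le_open f a b M : a <= b -> ex_RInt f a b ->
  (forall t, a < t < b -> Rabs (f t) <= M) -> Rabs (RInt f a b) <= (b - a) * M.
Proof.
  intros Hab Hex HM. destruct (Req_dec a b) as [->|Hne].
  { rewrite RInt_point. unfold zero; simpl. rewrite Rabs_R0. lra. }
  assert (HM0 : 0 <= M).
  { pose proof (Rabs_pos (f ((a + b) / 2))). assert (Rabs (f ((a + b) / 2)) <= M) by (apply HM; lra). lra. }
  set (g := fun t => if Rlt_dec a t then if Rlt_dec t b then f t else 0 else 0).
  assert (Hfg : forall x, Rmin a b < x < Rmax a b -> f x = g x).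
  { intros x Hx. rewrite Rmin_left, Rmax_right in Hx by lra.
    unfold g. destruct Rlt_dec; [destruct Rlt_dec|]; lra. }
  rewrite (RInt_ext f g a b Hfg).
  apply abs_RInt_le_const; auto.
  - apply ex_RInt_ext with f; auto.
  - intros t Ht. unfold g. destruct Rlt_dec; [destruct Rlt_dec|];
      [apply HM; lra | rewrite Rabs_R0; lra ..].
Qed.

Lemma abs_RInt_le_open_any f a b M : ex_RInt f a b ->
  (forall t, Rmin a b < t < Rmax a b -> Rabs (f t) <= M) ->
  Rabs (RInt f a b) <= Rabs (b - a) * M.
Proof.
  intros Hex HM. destruct (Rle_dec a b).
  - rewrite (Rabs_right (b - a)) by lra. apply abs_RInt_le_open; auto.
    intros t Ht. apply HM. rewrite Rmin_left, Rmax_right; lra.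
  - rewrite <- (opp_RInt_swap f b a) by (apply ex_RInt_swap; auto). unfold opp; simpl.
    rewrite Rabs_Ropp, (Rabs_left (b - a)) by lra. replace (- (b - a)) with (a - b) by ring.
    apply abs_RInt_le_open; [lra | apply ex_RInt_swap; auto |].
    intros t Ht. apply HM. rewrite Rmin_right, Rmax_left; lra.
Qed.

Lemma is_RInt_vanishing (f : R -> R) u v :
  (forall y, Rmin u v < y < Rmax u v -> f y = 0) -> is_RInt f u v 0.
Proof.
  intros H. apply is_RInt_ext with (fun _ => 0); [intros; symmetry; auto|].
  pose proof (@is_RInt_const R_NormedModule u v 0) as H0.
  unfold scal in H0; simpl in H0; unfold mult in H0; simpl in H0. rewrite Rmult_0_r in H0. exact H0.
Qed.

Lemma is_RInt_compact_support f c a b : 0 < c -> (forall y, c <= Rabs y -> f y = 0) ->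
  ex_RInt f (-c) c -> a <= -c -> c <= b -> is_RInt f a b (RInt f (-c) c).
Proof.
  intros Hc Hz Hex Ha Hb.
  replace (RInt f (-c) c) with (plus (plus 0 (RInt f (-c) c)) 0) by (unfold plus; simpl; ring).
  apply (@is_RInt_Chasles R_NormedModule) with c; [apply (@is_RInt_Chasles R_NormedModule) with (-c)|].
  - apply is_RInt_vanishing. intros y Hy. rewrite Rmin_left, Rmax_right in Hy by lra.
    apply Hz. rewrite Rabs_left; lra.
  - apply (@RInt_correct R_CompleteNormedModule); auto.
  - apply is_RInt_vanishing. intros y Hy. rewrite Rmin_left, Rmax_right in Hy by lra.
    apply Hz. rewrite Rabs_right; lra.
Qed.

Lemma RInt_gen_compact_support f c : 0 < c -> (forall y, c <= Rabs y -> f y = 0) ->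
  ex_RInt f (-c) c -> RInt_gen f (Rbar_locally m_infty) (Rbar_locally p_infty) = RInt f (-c) c.
Proof.
  intros Hc Hz Hex. apply is_RInt_gen_unique. intros P HP. simpl.
  apply Filter_prod with (fun a => a < -c) (fun b => c < b); [exists (-c); auto | exists c; auto |].
  intros a b Ha Hb. exists (RInt f (-c) c). split.
  - apply is_RInt_compact_support; simpl; auto; lra.
  - apply locally_singleton. auto.
Qed.

Lemma seg_continuous_interior f a b y : seg_continuous f a b -> a < y < b -> continuous f y.
Proof.
  intros Hf Hy. apply continuous_of_eps_delta. intros eps He.
  destruct (Hf y ltac:(lra) eps He) as [d [Hd H]].
  exists (Rmin d (Rmin (y - a) (b - y))).
  destruct (Rmin3_spec d (y - a) (b - y)) as [Hm [Hm1 [Hm2 Hm3]]]; [lra .. |].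
  split; auto. intros z Hz. apply H; split_Rabs; lra.
Qed.

Lemma RInt_derive_open_seg F f s0 a b :
  (forall x, Rabs x < s0 -> is_derive F x (f x)) -> (forall x, Rabs x < s0 -> continuous f x) ->
  Rabs a < s0 -> Rabs b < s0 -> RInt f a b = F b - F a.
Proof.
  intros HF Hf Ha Hb.
  assert (Hin : forall x, Rmin a b <= x <= Rmax a b -> Rabs x < s0)
    by (intros x Hx; unfold Rmin, Rmax in Hx; destruct Rle_dec; split_Rabs; lra).
  apply (@is_RInt_unique R_CompleteNormedModule).
  apply (is_RInt_derive (V := R_CompleteNormedModule) F f); intros x Hx; [apply HF | apply Hf]; auto.
Qed.

Section ClosedSegFTC.

Variables (F G : R -> R) (s0 k : R).
Hypothesis Hs : 0 < s0.
Hypothesis HF : forall x, Rabs x < s0 -> is_derive F x (k * G x).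
Hypothesis HG : seg_continuous G (-s0) s0.

Lemma ex_RInt_scal_subseg u v : Rabs u <= s0 -> Rabs v <= s0 -> ex_RInt (fun x => k * G x) u v.
Proof.
  intros Hu Hv. apply ex_RInt_subseg with s0; auto.
  apply (ex_RInt_scal (V := R_NormedModule)). apply ex_RInt_seg_continuous; auto; lra.
Qed.

Lemma FTC_closed_seg_error MG eta : (forall y, -s0 <= y <= s0 -> Rabs (G y) <= MG) -> 0 < eta < s0 ->
  Rabs (F s0 - F (-s0) - k * RInt G (-s0) s0)
    <= Rabs (F (s0 - eta) - F s0) + Rabs (F (-s0 + eta) - F (-s0)) + 2 * eta * (Rabs k * MG).
Proof.
  intros HMG Heta. set (kG := fun x => k * G x). set (a := - s0 + eta). set (b := s0 - eta).
  assert (Hab : Rabs a <= s0 /\ Rabs b <= s0 /\ Rabs (-s0) <= s0 /\ Rabs s0 <= s0)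
    by (unfold a, b; repeat split; split_Rabs; lra).
  assert (Htail : forall u v, Rabs u <= s0 -> Rabs v <= s0 ->
    Rabs (RInt kG u v) <= Rabs (v - u) * (Rabs k * MG)).
  { intros u v Hu Hv. apply abs_RInt_le_open_any; [apply ex_RInt_scal_subseg; auto|].
    intros t Ht. unfold kG. rewrite Rabs_mult. apply Rmult_le_compat_l; [apply Rabs_pos|].
    apply HMG. unfold Rmin, Rmax in Ht. destruct Rle_dec; split_Rabs; lra. }
  assert (Hmid : RInt kG a b = F b - F a).
  { apply RInt_derive_open_seg with s0; auto; [| unfold a | unfold b]; try (split_Rabs; lra).
    intros x Hx. apply (continuous_mult (fun _ => k) G); [apply continuous_const|].
    apply (seg_continuous_interior _ (-s0) s0); auto. split_Rabs; lra. }
  replace (k * RInt G (-s0) s0) with (RInt kG (-s0) s0)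
    by (apply (RInt_scal (V := R_CompleteNormedModule) G); apply ex_RInt_seg_continuous; auto; lra).
  rewrite <- (RInt_Chasles_R kG (-s0) a s0), <- (RInt_Chasles_R kG a b s0), Hmid
    by (apply ex_RInt_scal_subseg; tauto).
  pose proof (Htail (-s0) a ltac:(tauto) ltac:(tauto)) as B1.
  pose proof (Htail b s0 ltac:(tauto) ltac:(tauto)) as B2.
  replace (a - - s0) with eta in B1 by (unfold a; ring). replace (s0 - b) with eta in B2 by (unfold b; ring).
  rewrite (Rabs_right eta) in B1, B2 by lra.
  replace (F s0 - F (- s0) - (RInt kG (- s0) a + (F b - F a + RInt kG b s0)))
    with ((- (F b - F s0) + (F a - F (-s0))) - RInt kG (- s0) a - RInt kG b s0) by ring.
  eapply Rle_trans; [apply Rabs_triang3|].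
  pose proof (Rabs_triang (- (F b - F s0)) (F a - F (-s0))). rewrite Rabs_Ropp in *. lra.
Qed.

(* [F] is only differentiable inside and only continuous up to the endpoints:
   let [eta] go to 0 in [FTC_closed_seg_error]. *)
Lemma FTC_closed_seg :
  filterlim F (within (fun y => Rabs y <= s0) (locally s0)) (locally (F s0)) ->
  filterlim F (within (fun y => Rabs y <= s0) (locally (-s0))) (locally (F (-s0))) ->
  F s0 - F (-s0) = k * RInt G (-s0) s0.
Proof.
  intros Hr Hl. destruct (seg_continuous_bounded G (-s0) s0) as [MG HMG]; [lra | auto |].
  apply Rminus_diag_uniq. apply (eq0_of_arbitrarily_small _ 3). intros eps He.
  destruct (within_eps_delta F _ s0 Hr eps He) as [d1 [Hd1 H1]].
  destruct (within_eps_delta F _ (-s0) Hl eps He) as [d2 [Hd2 H2]].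
  set (K := 2 * (Rabs k * Rabs MG) + 1).
  assert (HK : 0 < K) by (unfold K; pose proof (Rabs_pos k); pose proof (Rabs_pos MG); nra).
  destruct (Rmin3_spec (Rmin d1 d2) s0 (eps / K)) as [Hm0 [Hm1 [Hm2 Hm3]]];
    [apply Rmin_pos; auto | auto | apply Rdiv_lt_0_compat; lra |].
  set (eta := Rmin (Rmin d1 d2) (Rmin s0 (eps / K)) / 2) in *.
  assert (Heta : 0 < eta /\ eta < d1 /\ eta < d2 /\ eta < s0)
    by (pose proof (Rmin_l d1 d2); pose proof (Rmin_r d1 d2); unfold eta; lra).
  assert (HetaK : eta * K <= eps).
  { apply (Rmult_le_reg_r (/ K)); [apply Rinv_0_lt_compat; auto|].
    rewrite Rmult_assoc, Rinv_r by lra. unfold eta. unfold Rdiv in Hm3. lra. }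
  eapply Rle_trans; [apply (FTC_closed_seg_error (Rabs MG) eta) | ].
  - intros y Hy. eapply Rle_trans; [apply HMG; auto | apply Rle_abs].
  - lra.
  - assert (Rabs (F (s0 - eta) - F s0) < eps) by (apply H1; split_Rabs; lra).
    assert (Rabs (F (- s0 + eta) - F (- s0)) < eps) by (apply H2; split_Rabs; lra).
    unfold K in HetaK. rewrite Rmult_plus_distr_l in HetaK. lra.
Qed.

End ClosedSegFTC.

(** Exponential polynomials *)

(* The kernel [K2] coincides on each half-line with a sum of two terms
   [(p + q z) exp (sg z)], a class closed under differentiation. *)
Definition exp_affine (p q sg z : R) := (p + q * z) * exp (sg * z).

Record ExpPoly := mkExpPoly { p1 : R; q1 : R; s1 : R; p2 : R; q2 : R; s2 : R }.

Definition ep (P : ExpPoly) z :=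
  exp_affine (p1 P) (q1 P) (s1 P) z + exp_affine (p2 P) (q2 P) (s2 P) z.

Definition ep_deriv (P : ExpPoly) :=
  mkExpPoly (p1 P * s1 P + q1 P) (q1 P * s1 P) (s1 P) (p2 P * s2 P + q2 P) (q2 P * s2 P) (s2 P).

Fixpoint ep_deriv_n n P := match n with O => P | S n => ep_deriv (ep_deriv_n n P) end.

Lemma is_derive_ep P z : is_derive (ep P) z (ep (ep_deriv P) z).
Proof. unfold ep, exp_affine, ep_deriv; simpl. auto_derive; auto. ring. Qed.

Lemma continuous_ep P z : continuous (ep P) z.
Proof. apply (ex_derive_continuous (ep P)). eexists. apply is_derive_ep. Qed.

Lemma continuous_ep_shift P x y : continuous (fun y => ep P (x - y)) y.
Proof. apply (ex_derive_continuous (fun y => ep P (x - y))). unfold ep, exp_affine. auto_derive. auto. Qed.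

Lemma ep_bounded P R0 : exists M, 0 <= M /\ forall z, Rabs z <= R0 -> Rabs (ep P z) <= M.
Proof.
  destruct (Rle_dec 0 R0).
  - destruct (continuous_bounded_on_seg (ep P) (-R0) R0) as [M HM]; [lra | apply continuous_ep |].
    exists (Rabs M). split; [apply Rabs_pos|]. intros z Hz.
    eapply Rle_trans; [apply HM; split_Rabs; lra | apply Rle_abs].
  - exists 0. split; [lra|]. intros z Hz. pose proof (Rabs_pos z). lra.
Qed.

Lemma MVT_everywhere f df a b : (forall x, is_derive f x (df x)) ->
  exists c, Rmin a b <= c <= Rmax a b /\ f b - f a = df c * (b - a).
Proof.
  intros H. destruct (MVT_gen f a b df) as [c [Hc E]]; [intros; auto | | exists c; auto].
  intros x _. apply continuity_pt_filterlim. apply (ex_derive_continuous f). eexists; apply H.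
Qed.

Lemma Rabs_between_le a b c R0 :
  Rmin a b <= c <= Rmax a b -> Rabs a <= R0 -> Rabs b <= R0 -> Rabs c <= R0.
Proof. unfold Rmin, Rmax. intros. destruct Rle_dec; split_Rabs; lra. Qed.

Lemma ep_lipschitz P R0 M z w : (forall u, Rabs u <= R0 -> Rabs (ep (ep_deriv P) u) <= M) ->
  Rabs z <= R0 -> Rabs w <= R0 -> Rabs (ep P w - ep P z) <= M * Rabs (w - z).
Proof.
  intros HM Hz Hw.
  destruct (MVT_everywhere (ep P) (ep (ep_deriv P)) z w (is_derive_ep P)) as [c [Hc E]].
  rewrite E, Rabs_mult. apply Rmult_le_compat_r; [apply Rabs_pos|].
  apply HM. eapply Rabs_between_le; eauto.
Qed.

Lemma ep_taylor P R0 M z e :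
  (forall w, Rabs w <= R0 -> Rabs (ep (ep_deriv (ep_deriv P)) w) <= M) ->
  Rabs z <= R0 -> Rabs (z + e) <= R0 ->
  Rabs (ep P (z + e) - ep P z - e * ep (ep_deriv P) z) <= M * e ^ 2.
Proof.
  intros HM Hz Hze.
  set (g := fun u => ep P (z + u) - ep P z - u * ep (ep_deriv P) z).
  set (dg := fun u => ep (ep_deriv P) (z + u) - ep (ep_deriv P) z).
  assert (Hg : forall u, is_derive g u (dg u)).
  { intros u. unfold g, dg, ep, exp_affine, ep_deriv; simpl. auto_derive; auto. ring. }
  destruct (MVT_everywhere g dg 0 e Hg) as [c [Hc E]].
  assert (Hge : g e = dg c * e).
  { replace (dg c * e) with (dg c * (e - 0)) by ring. rewrite <- E. unfold g. rewrite Rplus_0_r. ring. }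
  change (Rabs (g e) <= M * e ^ 2). rewrite Hge.
  assert (Hce : Rabs c <= Rabs e) by (unfold Rmin, Rmax in Hc; destruct Rle_dec; split_Rabs; lra).
  assert (Hzc : Rabs (z + c) <= R0).
  { apply (Rabs_between_le z (z + e)); auto. unfold Rmin, Rmax in *. repeat destruct Rle_dec; lra. }
  assert (Hdg : Rabs (dg c) <= M * Rabs c).
  { unfold dg. replace c with ((z + c) - z) at 2 by ring. apply ep_lipschitz with R0; auto. }
  assert (HM0 : 0 <= M) by (pose proof (Rabs_pos (ep (ep_deriv (ep_deriv P)) z)); specialize (HM z Hz); lra).
  rewrite Rabs_mult, <- (pow2_abs e).
  apply Rle_trans with (M * Rabs c * Rabs e); [apply Rmult_le_compat_r; auto; apply Rabs_pos|].
  pose proof (Rabs_pos c). pose proof (Rabs_pos e).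
  assert (M * Rabs c <= M * Rabs e) by (apply Rmult_le_compat_l; auto). nra.
Qed.

Lemma is_derive_quadratic_remainder f x l C d : 0 < d ->
  (forall e, Rabs e < d -> Rabs (f (x + e) - f x - e * l) <= C * e ^ 2) -> is_derive f x l.
Proof.
  intros Hd H. apply is_derive_Reals. intros eps He.
  set (K := Rabs C + 1).
  assert (HK : 0 < K) by (unfold K; pose proof (Rabs_pos C); lra).
  assert (Hd2 : 0 < Rmin d (eps / K)) by (apply Rmin_pos; auto; apply Rdiv_lt_0_compat; lra).
  exists (mkposreal _ Hd2). intros e He0 Hel. simpl in Hel.
  assert (Hel1 : Rabs e < d) by (eapply Rlt_le_trans; [exact Hel | apply Rmin_l]).
  assert (Hel2 : Rabs e * K < eps).
  { assert (Rabs e < eps / K) by (eapply Rlt_le_trans; [exact Hel | apply Rmin_r]).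
    apply (Rmult_lt_compat_r K) in H0; auto. unfold Rdiv in H0. rewrite Rmult_assoc, Rinv_l in H0; lra. }
  specialize (H e Hel1).
  assert (Hae : 0 < Rabs e) by (apply Rabs_pos_lt; auto).
  replace ((f (x + e) - f x) / e - l) with ((f (x + e) - f x - e * l) / e) by (field; auto).
  unfold Rdiv. rewrite Rabs_mult, Rabs_inv, <- (pow2_abs e) in *.
  apply Rle_lt_trans with (C * Rabs e).
  - apply (Rmult_le_reg_r (Rabs e)); auto. rewrite Rmult_assoc, Rinv_l by lra. nra.
  - pose proof (Rle_abs C). unfold K in Hel2. nra.
Qed.

(** Convolution of a bounded profile with an exponential polynomial *)

Definition compact_profile (h : R -> R) (c Mh : R) :=
  0 < c /\ (forall y, c <= Rabs y -> h y = 0) /\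
  (forall w, (forall y, continuous w y) -> forall a b, ex_RInt (fun y => w y * h y) a b) /\
  (forall y, Rabs (h y) <= Mh).

Definition conv_seg h P L x := RInt (fun y => ep P (x - y) * h y) (-L) L.
Definition conv_right h P L x := RInt (fun y => ep P (x - y) * h y) x L.

Lemma ex_RInt_ep_profile h c Mh P x a b : compact_profile h c Mh ->
  ex_RInt (fun y => ep P (x - y) * h y) a b.
Proof.
  intros [_ [_ [Hw _]]]. apply (Hw (fun y => ep P (x - y))). intros y; apply continuous_ep_shift.
Qed.

Lemma abs_RInt_ep_taylor_le h c Mh P R0 M2 x e u v : compact_profile h c Mh ->
  (forall w, Rabs w <= R0 -> Rabs (ep (ep_deriv (ep_deriv P)) w) <= M2) ->
  (forall y, Rmin u v < y < Rmax u v -> Rabs (x - y) <= R0 /\ Rabs (x - y + e) <= R0) ->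
  Rabs (RInt (fun y => ep P (x + e - y) * h y - ep P (x - y) * h y
                         - e * (ep (ep_deriv P) (x - y) * h y)) u v)
    <= Rabs (v - u) * (M2 * e ^ 2 * Mh).
Proof.
  intros Hh HM2 Hseg. pose proof Hh as [_ [_ [Hw HMh]]].
  set (g := fun y => ep P (x + e - y) - ep P (x - y) - e * ep (ep_deriv P) (x - y)).
  apply abs_RInt_le_open_any.
  - apply (ex_RInt_ext (fun y => g y * h y)); [intros; unfold g; simpl; ring|].
    apply Hw. intros y. apply (ex_derive_continuous g). unfold g, ep, exp_affine. auto_derive. auto.
  - intros t Ht. destruct (Hseg t Ht) as [Ht1 Ht2].
    replace (x + e - t) with (x - t + e) by ring.
    replace (ep P (x - t + e) * h t - ep P (x - t) * h t - e * (ep (ep_deriv P) (x - t) * h t))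
      with ((ep P (x - t + e) - ep P (x - t) - e * ep (ep_deriv P) (x - t)) * h t) by ring.
    rewrite Rabs_mult. apply Rmult_le_compat; try apply Rabs_pos; auto.
    apply ep_taylor with R0; auto.
Qed.

Lemma is_derive_conv_seg h c Mh P L x : compact_profile h c Mh -> 0 <= L ->
  is_derive (conv_seg h P L) x (conv_seg h (ep_deriv P) L x).
Proof.
  intros Hh HL.
  destruct (ep_bounded (ep_deriv (ep_deriv P)) (Rabs x + L + 1)) as [M2 [_ HM2]].
  apply is_derive_quadratic_remainder with (C := 2 * L * (M2 * Mh)) (d := 1); [lra|].
  intros e He. unfold conv_seg.
  rewrite <- RInt_minus_minus_scal by (eapply ex_RInt_ep_profile; eauto).
  replace (2 * L * (M2 * Mh) * e ^ 2) with (Rabs (L - - L) * (M2 * e ^ 2 * Mh))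
    by (rewrite Rabs_right by lra; ring).
  apply abs_RInt_ep_taylor_le with (R0 := Rabs x + L + 1) (c := c); auto.
  intros y Hy. rewrite Rmin_left, Rmax_right in Hy by lra. split; split_Rabs; lra.
Qed.

Lemma abs_RInt_ep_profile_short_le h c Mh P x e B : compact_profile h c Mh ->
  (forall z, Rabs z <= Rabs e -> Rabs (ep P z) <= B) ->
  Rabs (RInt (fun y => ep P (x - y) * h y) x (x + e)) <= Rabs e * (B * Mh).
Proof.
  intros Hh HB. pose proof Hh as [_ [_ [_ HMh]]].
  replace (Rabs e) with (Rabs (x + e - x)) at 1 by (f_equal; ring).
  apply abs_RInt_le_open_any; [eapply ex_RInt_ep_profile; eauto|].
  intros t Ht. rewrite Rabs_mult. apply Rmult_le_compat; try apply Rabs_pos; auto.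
  apply HB. unfold Rmin, Rmax in Ht; destruct Rle_dec; split_Rabs; lra.
Qed.

(* The kernel jump at the diagonal y = x produces no boundary term because
   [ep Q 0 = 0]. *)
Lemma is_derive_conv_right h c Mh Q L x : compact_profile h c Mh -> ep Q 0 = 0 ->
  is_derive (conv_right h Q L) x (conv_right h (ep_deriv Q) L x).
Proof.
  intros Hh HQ0. pose proof Hh as [_ [_ [_ HMh]]].
  assert (HMh0 : 0 <= Mh) by (specialize (HMh 0); pose proof (Rabs_pos (h 0)); lra).
  set (R0 := Rabs x + Rabs L + 1).
  destruct (ep_bounded (ep_deriv (ep_deriv Q)) R0) as [M2 [HM20 HM2]].
  destruct (ep_bounded (ep_deriv Q) R0) as [M1 [HM10 HM1]].
  apply is_derive_quadratic_remainder
    with (C := (Rabs (L - x) + 1) * (M2 * Mh) + 2 * (M1 * Mh)) (d := 1); [lra|].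
  intros e He. unfold conv_right.
  set (F0 := fun z y => ep Q (z - y) * h y).
  set (F1 := fun z y => ep (ep_deriv Q) (z - y) * h y).
  change (fun y => ep Q (x - y) * h y) with (F0 x).
  change (fun y => ep (ep_deriv Q) (x - y) * h y) with (F1 x).
  change (fun y => ep Q (x + e - y) * h y) with (F0 (x + e)).
  rewrite <- (RInt_Chasles_R (F0 x) x (x + e) L), <- (RInt_Chasles_R (F1 x) x (x + e) L)
    by (eapply ex_RInt_ep_profile; eauto).
  set (A := RInt (F0 x) x (x + e)). set (B := RInt (F1 x) x (x + e)).
  set (T := RInt (fun y => F0 (x + e) y - F0 x y - e * F1 x y) (x + e) L).
  assert (ET : T = RInt (F0 (x + e)) (x + e) L - RInt (F0 x) (x + e) L - e * RInt (F1 x) (x + e) L)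
    by (apply RInt_minus_minus_scal; unfold F0, F1; eapply ex_RInt_ep_profile; eauto).
  assert (HA : Rabs A <= Rabs e * (M1 * Rabs e * Mh)).
  { apply abs_RInt_ep_profile_short_le with c; auto. intros z Hz.
    replace (ep Q z) with (ep Q z - ep Q 0) by (rewrite HQ0; ring).
    assert (Hz0 : Rabs z <= R0 /\ Rabs 0 <= R0)
      by (rewrite Rabs_R0; unfold R0; pose proof (Rabs_pos x); pose proof (Rabs_pos L); lra).
    eapply Rle_trans; [apply ep_lipschitz with R0; [exact HM1 | apply Hz0 | apply Hz0]|].
    rewrite Rminus_0_r. apply Rmult_le_compat_l; auto. }
  assert (HB : Rabs B <= Rabs e * (M1 * Mh)).
  { apply abs_RInt_ep_profile_short_le with c; auto. intros z Hz.
    apply HM1. unfold R0; pose proof (Rabs_pos x); pose proof (Rabs_pos L); lra. }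
  assert (HT : Rabs T <= (Rabs (L - x) + 1) * (M2 * e ^ 2 * Mh)).
  { unfold T, F0, F1. eapply Rle_trans.
    - apply abs_RInt_ep_taylor_le with (R0 := R0) (c := c) (Mh := Mh); auto.
      intros y Hy. unfold Rmin, Rmax in Hy; destruct Rle_dec; unfold R0; split; split_Rabs; lra.
    - apply Rmult_le_compat_r; [apply Rmult_le_pos; auto; apply Rmult_le_pos; auto; nra|].
      split_Rabs; lra. }
  replace (RInt (F0 (x + e)) (x + e) L - (A + RInt (F0 x) (x + e) L) - e * (B + RInt (F1 x) (x + e) L))
    with (T - A - e * B) by (rewrite ET; ring).
  eapply Rle_trans; [apply Rabs_triang3|]. rewrite Rabs_mult, <- (pow2_abs e) in *.
  assert (Rabs e * Rabs B <= Rabs e * (Rabs e * (M1 * Mh)))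
    by (apply Rmult_le_compat_l; auto; apply Rabs_pos).
  apply Rle_trans with ((Rabs (L - x) + 1) * (M2 * Rabs e ^ 2 * Mh) + Rabs e * (M1 * Rabs e * Mh)
                        + Rabs e * (Rabs e * (M1 * Mh))); [lra | right; ring].
Qed.

Lemma is_derive_conv_split h c Mh (f : R -> R) P Q L : compact_profile h c Mh -> 0 <= L ->
  ep Q 0 = 0 -> (forall x, Rabs x < L -> f x = conv_seg h P L x + conv_right h Q L x) ->
  forall x, Rabs x < L -> is_derive f x (conv_seg h (ep_deriv P) L x + conv_right h (ep_deriv Q) L x).
Proof.
  intros Hh HL HQ Hf x Hx.
  apply is_derive_ext_loc with (fun y => conv_seg h P L y + conv_right h Q L y).
  - assert (Hd : 0 < L - Rabs x) by lra. exists (mkposreal _ Hd). intros y Hy. symmetry. apply Hf.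
    simpl in Hy. unfold ball in Hy; simpl in Hy.
    unfold AbsRing_ball, abs, minus, plus, opp in Hy; simpl in Hy. split_Rabs; lra.
  - apply (is_derive_plus (conv_seg h P L) (conv_right h Q L));
      [eapply is_derive_conv_seg | eapply is_derive_conv_right]; eauto.
Qed.

(** The smoothed film [hbar] *)

Lemma cont_on_D_seg_continuous f s : cont_on_D f -> 0 < s -> seg_continuous (fun y => f y s) (-s) s.
Proof.
  intros Hf Hs y Hy eps He.
  destruct (cont_on_D_eps_delta f y s Hf) with (eps := eps) as [d [Hd H]];
    [split; simpl; auto; split_Rabs; lra | auto |].
  exists d; split; auto. intros z Hz Hzy.
  apply H; [auto | rewrite Rminus_eq_0, Rabs_R0; auto | split; simpl; auto; split_Rabs; lra].
Qed.

Lemma hsol_compact_profile xcl phi t : cont_on_D phi -> 0 < xcl t ->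
  exists Mh, compact_profile (fun y => hsol xcl phi y t) (xcl t) Mh.
Proof.
  intros Hc Hs. set (s := xcl t) in *.
  set (g := fun y => phi (clamp (-s) s y) s).
  assert (Hg : forall y, continuous g y).
  { intros y. apply (continuous_clamp_comp (fun y => phi y s)); [lra | apply cont_on_D_seg_continuous; auto]. }
  assert (Hhg : forall y, Rabs y < s -> hsol xcl phi y t = g y).
  { intros y Hy. unfold hsol, g. fold s. destruct Rlt_dec; [|lra]. rewrite clamp_id; auto. split_Rabs; lra. }
  assert (Hh0 : forall y, s <= Rabs y -> hsol xcl phi y t = 0).
  { intros y Hy. unfold hsol. fold s. destruct Rlt_dec; lra. }
  destruct (continuous_bounded_on_seg g (-s) s) as [M HM]; [lra | auto |].
  exists (Rabs M). split; [auto | split; [auto | split]].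
  - intros w Hwc a b. set (L := Rabs a + Rabs b + s).
    assert (HL : Rabs a <= L /\ Rabs b <= L /\ s <= L)
      by (unfold L; pose proof (Rabs_pos a); pose proof (Rabs_pos b); lra).
    apply ex_RInt_subseg with L; [| tauto ..].
    apply (@ex_RInt_Chasles R_NormedModule) with s;
      [apply (@ex_RInt_Chasles R_NormedModule) with (-s)|].
    + exists 0. apply is_RInt_vanishing. intros y Hy.
      rewrite Rmin_left, Rmax_right in Hy by lra. rewrite Hh0; [ring | split_Rabs; lra].
    + apply ex_RInt_ext with (fun y => w y * g y).
      * intros y Hy. rewrite Rmin_left, Rmax_right in Hy by lra. rewrite Hhg; auto. split_Rabs; lra.
      * apply (@ex_RInt_continuous R_CompleteNormedModule). intros z _. apply (continuous_mult w g); auto.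
    + exists 0. apply is_RInt_vanishing. intros y Hy.
      rewrite Rmin_left, Rmax_right in Hy by lra. rewrite Hh0; [ring | split_Rabs; lra].
  - intros y. destruct (Rlt_dec (Rabs y) s).
    + rewrite Hhg by auto. eapply Rle_trans; [apply HM | apply Rle_abs]. unfold g. split_Rabs; lra.
    + rewrite Hh0 by lra. rewrite Rabs_R0. apply Rabs_pos.
Qed.

Lemma hsol_even xcl phi t y : even_in_x phi -> 0 < xcl t -> hsol xcl phi (- y) t = hsol xcl phi y t.
Proof. intros He Hs. unfold hsol. rewrite Rabs_Ropp. destruct Rlt_dec; auto. apply He; auto. lra. Qed.

Definition K2_coef alpha := / (4 * alpha ^ 2).

(* [K2] equals [ep K2_right] on [0, +oo) and [ep K2_right + ep K2_jump] on (-oo, 0]. *)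
Definition K2_right alpha := mkExpPoly (K2_coef alpha * alpha) (K2_coef alpha) (- / alpha) 0 0 0.
Definition K2_jump alpha :=
  mkExpPoly (K2_coef alpha * alpha) (- K2_coef alpha) (/ alpha)
            (- (K2_coef alpha * alpha)) (- K2_coef alpha) (- / alpha).

Lemma K2_right_branch alpha z : 0 < alpha -> 0 <= z -> K2 alpha z = ep (K2_right alpha) z.
Proof.
  intros Ha Hz. unfold K2, ep, exp_affine, K2_right, K2_coef; simpl. rewrite Rabs_right by lra.
  replace (- z / alpha) with (- / alpha * z) by (field; lra). ring.
Qed.

Lemma K2_left_branch alpha z : 0 < alpha -> z <= 0 ->
  K2 alpha z = ep (K2_right alpha) z + ep (K2_jump alpha) z.
Proof.
  intros Ha Hz. unfold K2, ep, exp_affine, K2_right, K2_jump, K2_coef; simpl. rewrite Rabs_left1 by lra.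
  replace (- - z / alpha) with (/ alpha * z) by (field; lra). ring.
Qed.

(* [K2] is C^2: its first two derivatives have no jump at 0. *)
Lemma K2_jump_deriv_n_0 alpha n : 0 < alpha -> (n <= 2)%nat -> ep (ep_deriv_n n (K2_jump alpha)) 0 = 0.
Proof.
  intros Ha Hn. destruct n as [|[|[|n]]]; [..|exfalso; lia];
    unfold ep, exp_affine, K2_jump, ep_deriv, K2_coef; simpl; rewrite !Rmult_0_r, exp_0; field; lra.
Qed.

Lemma K2_even alpha z : K2 alpha (- z) = K2 alpha z.
Proof. unfold K2. rewrite Rabs_Ropp. reflexivity. Qed.

Lemma is_RInt_K2_profile alpha h c Mh L x : 0 < alpha -> compact_profile h c Mh -> Rabs x <= L ->
  is_RInt (fun y => K2 alpha (x - y) * h y) (-L) L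
    (conv_seg h (K2_right alpha) L x + conv_right h (K2_jump alpha) L x).
Proof.
  intros Ha Hh Hx. unfold conv_seg, conv_right.
  set (fR := fun y => ep (K2_right alpha) (x - y) * h y).
  set (fJ := fun y => ep (K2_jump alpha) (x - y) * h y).
  rewrite <- (RInt_Chasles_R fR (-L) x L) by (eapply ex_RInt_ep_profile; eauto).
  replace (RInt fR (- L) x + RInt fR x L + RInt fJ x L)
    with (plus (RInt fR (- L) x) (plus (RInt fR x L) (RInt fJ x L))) by (unfold plus; simpl; ring).
  apply (@is_RInt_Chasles R_NormedModule) with x.
  - apply is_RInt_ext with fR.
    + intros y Hy. rewrite Rmin_left, Rmax_right in Hy by (split_Rabs; lra).
      unfold fR. rewrite K2_right_branch; auto; lra.
    + apply (@RInt_correct R_CompleteNormedModule). eapply ex_RInt_ep_profile; eauto.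
  - apply is_RInt_ext with (fun y => plus (fR y) (fJ y)).
    + intros y Hy. rewrite Rmin_left, Rmax_right in Hy by (split_Rabs; lra).
      unfold fR, fJ, plus; simpl. rewrite K2_left_branch by lra. ring.
    + apply (@is_RInt_plus R_NormedModule);
        apply (@RInt_correct R_CompleteNormedModule); eapply ex_RInt_ep_profile; eauto.
Qed.

Lemma ex_RInt_K2_profile alpha h c Mh x L : 0 < alpha -> compact_profile h c Mh ->
  Rabs x <= L -> c <= L -> ex_RInt (fun y => K2 alpha (x - y) * h y) (-c) c.
Proof.
  intros Ha Hh HxL HcL. pose proof Hh as [Hs _].
  apply ex_RInt_subseg with L; [eexists; eapply is_RInt_K2_profile; eauto | ..];
    [rewrite Rabs_Ropp|]; rewrite Rabs_right; lra.
Qed.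

Lemma hbar_as_RInt alpha xcl phi t Mh x : 0 < alpha ->
  compact_profile (fun y => hsol xcl phi y t) (xcl t) Mh ->
  hbar alpha xcl phi x t = RInt (fun y => K2 alpha (x - y) * hsol xcl phi y t) (- xcl t) (xcl t).
Proof.
  intros Ha Hh. pose proof Hh as [Hs [Hz _]]. unfold hbar.
  apply RInt_gen_compact_support; auto.
  - intros y Hy. rewrite Hz; auto. ring.
  - apply ex_RInt_K2_profile with (Mh := Mh) (L := Rabs x + xcl t); auto;
      pose proof (Rabs_pos x); lra.
Qed.

Lemma hbar_split alpha xcl phi t Mh L x : 0 < alpha ->
  compact_profile (fun y => hsol xcl phi y t) (xcl t) Mh -> xcl t <= L -> Rabs x <= L ->
  hbar alpha xcl phi x t = conv_seg (fun y => hsol xcl phi y t) (K2_right alpha) L x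
                         + conv_right (fun y => hsol xcl phi y t) (K2_jump alpha) L x.
Proof.
  intros Ha Hh HL Hx. pose proof Hh as [Hs [Hz _]]. rewrite (hbar_as_RInt alpha xcl phi t Mh x Ha Hh).
  pose proof (is_RInt_K2_profile alpha _ _ Mh L x Ha Hh Hx) as H1.
  apply (@is_RInt_unique R_CompleteNormedModule) in H1. rewrite <- H1. symmetry. apply (@is_RInt_unique R_CompleteNormedModule).
  apply is_RInt_compact_support; auto; try lra.
  - intros y Hy. rewrite Hz; auto. ring.
  - apply ex_RInt_K2_profile with (Mh := Mh) (L := L); auto.
Qed.

Lemma hbar_even alpha xcl phi t Mh x : 0 < alpha -> even_in_x phi ->
  compact_profile (fun y => hsol xcl phi y t) (xcl t) Mh ->
  hbar alpha xcl phi (- x) t = hbar alpha xcl phi x t.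
Proof.
  intros Ha He Hh. pose proof Hh as [Hs _].
  rewrite !(hbar_as_RInt alpha xcl phi t Mh _ Ha Hh).
  set (s := xcl t) in *.
  set (f := fun y => K2 alpha (x - y) * hsol xcl phi y t).
  assert (Hex : ex_RInt f (- s) s)
    by (apply ex_RInt_K2_profile with (Mh := Mh) (L := Rabs x + s); auto; pose proof (Rabs_pos x); lra).
  apply (@is_RInt_unique R_CompleteNormedModule).
  apply (@is_RInt_ext R_NormedModule) with (fun y => opp (opp (f (- y)))).
  - intros y _. unfold f, opp; simpl. rewrite Ropp_involutive.
    replace (x - - y) with (- (- x - y)) by ring. rewrite K2_even, hsol_even; auto.
  - rewrite <- (opp_opp (RInt f (- s) s)).
    apply (@is_RInt_opp R_NormedModule), (@is_RInt_swap R_NormedModule),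
      (@is_RInt_comp_opp R_NormedModule).
    rewrite Ropp_involutive. apply (@RInt_correct R_CompleteNormedModule). auto.
Qed.


Lemma Derive_n_hbar_split alpha xcl phi t Mh L n x : 0 < alpha ->
  compact_profile (fun y => hsol xcl phi y t) (xcl t) Mh -> xcl t <= L -> (n <= 2)%nat -> Rabs x < L ->
  Derive_n (fun y => hbar alpha xcl phi y t) n x =
    conv_seg (fun y => hsol xcl phi y t) (ep_deriv_n n (K2_right alpha)) L x
  + conv_right (fun y => hsol xcl phi y t) (ep_deriv_n n (K2_jump alpha)) L x.
Proof.
  intros Ha Hh HL. pose proof Hh as [Hs _]. revert x. induction n as [|n IH]; intros Hn x Hx.
  - apply hbar_split with Mh; auto; lra.
  - apply is_derive_unique. simpl ep_deriv_n.
    apply (is_derive_conv_split _ (xcl t) Mh); auto; [lra | apply K2_jump_deriv_n_0; auto; lia |].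
    intros y Hy. apply IH; auto. lia.
Qed.

Lemma ex_derive_n_hbar alpha xcl phi t Mh n x : 0 < alpha ->
  compact_profile (fun y => hsol xcl phi y t) (xcl t) Mh -> (n <= 3)%nat ->
  ex_derive_n (fun y => hbar alpha xcl phi y t) n x.
Proof.
  intros Ha Hh Hn. pose proof Hh as [Hs _]. destruct n as [|n]; [exact I|].
  change (ex_derive (Derive_n (fun y => hbar alpha xcl phi y t) n) x).
  set (L := Rabs x + xcl t + 1).
  assert (HL : xcl t + 1 <= L /\ Rabs x < L) by (unfold L; pose proof (Rabs_pos x); lra).
  eexists. apply (is_derive_conv_split _ (xcl t) Mh _ (ep_deriv_n n (K2_right alpha))
                    (ep_deriv_n n (K2_jump alpha)) L Hh); [lra | apply K2_jump_deriv_n_0; auto; lia | | lra].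
  intros y Hy. apply Derive_n_hbar_split with Mh; auto; [lra | lia].
Qed.


Lemma hbar_xxx_odd alpha xcl phi t Mh x : 0 < alpha -> even_in_x phi ->
  compact_profile (fun y => hsol xcl phi y t) (xcl t) Mh ->
  hbar_xxx alpha xcl phi (- x) t = - hbar_xxx alpha xcl phi x t.
Proof.
  intros Ha He Hh. unfold hbar_xxx.
  assert (Hev : forall y, hbar alpha xcl phi (- y) t = hbar alpha xcl phi y t)
    by (intros y; apply (hbar_even alpha xcl phi t Mh y Ha He Hh)).
  rewrite <- (Derive_n_ext (fun y => hbar alpha xcl phi (- y) t) (fun y => hbar alpha xcl phi y t) 3 x Hev).
  rewrite (Derive_n_comp_opp (fun y => hbar alpha xcl phi y t)).
  - set (D := Derive_n (fun y => hbar alpha xcl phi y t) 3 (- x)). simpl pow. ring.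
  - exists (mkposreal 1 Rlt_0_1). intros y _ k Hk. apply ex_derive_n_hbar with Mh; auto.
Qed.

(** Mass of the droplet as a function of the contact-line position *)

Definition seg_mass (phi : R -> R -> R) s := RInt (fun y => phi y s) (-s) s.

Lemma mass_seg_mass xcl phi t : cont_on_D phi -> 0 < xcl t -> mass xcl phi t = seg_mass phi (xcl t).
Proof.
  intros Hc Hs. unfold mass, seg_mass. set (s := xcl t) in *.
  assert (Hex : ex_RInt (fun y => phi y s) (- s) s)
    by (apply ex_RInt_seg_continuous; [lra | apply cont_on_D_seg_continuous; auto]).
  assert (Hext : forall y, Rmin (- s) s < y < Rmax (- s) s -> phi y s = hsol xcl phi y t).
  { intros y Hy. rewrite Rmin_left, Rmax_right in Hy by lra.
    unfold hsol. fold s. destruct Rlt_dec; [auto | split_Rabs; lra]. }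
  rewrite (RInt_gen_compact_support _ s); auto.
  - symmetry. apply RInt_ext. auto.
  - intros y Hy. unfold hsol. fold s. destruct Rlt_dec; lra.
  - apply ex_RInt_ext with (fun y => phi y s); auto.
Qed.

(* The modulus is obtained from a Lebesgue number of the cover of [-s0, s0]
   by the balls of continuity of [g] at the points [(t, s0)]. *)
Lemma cont_on_D_uniform (g : R -> R -> R) s0 : cont_on_D g -> 0 < s0 -> forall eps, 0 < eps ->
  exists d, 0 < d /\ forall y r, -s0 <= y <= s0 -> s0 <= r < s0 + d -> Rabs (g y r - g y s0) < eps.
Proof.
  intros Hg Hs eps He.
  assert (Hex : forall t, exists d : posreal, -s0 <= t <= s0 -> forall y r, Rabs (y - t) < d ->
     Rabs (r - s0) < d -> domD (y, r) -> Rabs (g y r - g t s0) < eps / 2).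
  { intros t. destruct (Rle_dec (-s0) t); [destruct (Rle_dec t s0)|];
      [| exists (mkposreal 1 Rlt_0_1); intros; lra ..].
    destruct (cont_on_D_eps_delta g t s0 Hg) with (eps := eps / 2) as [d [Hd H]];
      [split; simpl; auto; split_Rabs; lra | lra |].
    exists (mkposreal d Hd). intros _. exact H. }
  set (delta := fun t => proj1_sig (constructive_indefinite_description _ (Hex t))).
  assert (Hdelta : forall t, -s0 <= t <= s0 -> forall y r, Rabs (y - t) < delta t ->
     Rabs (r - s0) < delta t -> domD (y, r) -> Rabs (g y r - g t s0) < eps / 2).
  { intros t. unfold delta. destruct (constructive_indefinite_description _ (Hex t)) as [d Hd]. exact Hd. }
  destruct (compactness_value_1d (-s0) s0 delta) as [d Hd].
  exists d. split; [apply cond_pos|]. intros y r Hy Hr.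
  apply Classical_Prop.NNPP. intros Hn. apply (Hd y Hy). intros [t [Ht [H1 H2]]]. apply Hn.
  assert (A1 : Rabs (g y r - g t s0) < eps / 2)
    by (apply Hdelta; auto; [split_Rabs; lra | split; simpl; split_Rabs; lra]).
  assert (A2 : Rabs (g y s0 - g t s0) < eps / 2).
  { apply Hdelta; auto; [rewrite Rminus_eq_0, Rabs_R0; apply cond_pos | split; simpl; split_Rabs; lra]. }
  replace (g y r - g y s0) with ((g y r - g t s0) - (g y s0 - g t s0)) by ring.
  eapply Rle_lt_trans; [apply Rabs_triang|]. rewrite Rabs_Ropp. lra.
Qed.

Section SegMassExpansion.

Variables (phi phis : R -> R -> R) (s0 : R).
Hypothesis Hc : cont_on_D phi.
Hypothesis Hcs : cont_on_D phis.
Hypothesis Hder : forall x s, 0 < s -> Rabs x < s -> is_derive (fun r => phi x r) s (phis x s).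
Hypothesis Hs0 : 0 < s0.

Lemma ex_RInt_phi_slice s a b : s0 <= s -> Rabs a <= s -> Rabs b <= s -> ex_RInt (fun y => phi y s) a b.
Proof.
  intros Hs Ha Hb. apply ex_RInt_subseg with s; auto.
  apply ex_RInt_seg_continuous; [lra | apply cont_on_D_seg_continuous; auto; lra].
Qed.

Lemma abs_RInt_phi_taylor_le s eps : s0 < s ->
  (forall y r, -s0 <= y <= s0 -> s0 <= r <= s -> Rabs (phis y r - phis y s0) < eps) ->
  Rabs (RInt (fun y => phi y s - phi y s0 - (s - s0) * phis y s0) (-s0) s0)
    <= (s0 - - s0) * (eps * (s - s0)).
Proof.
  intros Hs Hunif. apply abs_RInt_le_open; [lra | |].
  - apply (ex_RInt_minus (V := R_NormedModule) (fun y => phi y s - phi y s0) (fun y => (s - s0) * phis y s0)).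
    + apply (ex_RInt_minus (V := R_NormedModule)); apply ex_RInt_phi_slice; split_Rabs; lra.
    + apply (ex_RInt_scal (V := R_NormedModule) (fun y => phis y s0)).
      apply ex_RInt_seg_continuous; [lra | apply cont_on_D_seg_continuous; auto].
  - intros y Hy.
    destruct (MVT_gen (fun r => phi y r) s0 s (fun r => phis y r)) as [c [Hcc E]].
    + intros x Hx. rewrite Rmin_left, Rmax_right in Hx by lra. apply Hder; [lra | split_Rabs; lra].
    + intros x Hx. rewrite Rmin_left, Rmax_right in Hx by lra. apply continuity_pt_filterlim.
      apply (ex_derive_continuous (fun r => phi y r)). eexists. apply Hder; [lra | split_Rabs; lra].
    + rewrite Rmin_left, Rmax_right in Hcc by lra. rewrite E.
      replace (phis y c * (s - s0) - (s - s0) * phis y s0) with ((phis y c - phis y s0) * (s - s0)) by ring.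
      rewrite Rabs_mult, (Rabs_right (s - s0)) by lra. apply Rmult_le_compat_r; [lra|].
      left. apply Hunif; lra.
Qed.

Hypothesis Hev : even_in_x phi.

Lemma seg_mass_increment s : s0 < s ->
  seg_mass phi s - seg_mass phi s0 - (s - s0) * (2 * phi s0 s0 + RInt (fun y => phis y s0) (-s0) s0)
  = RInt (fun y => phi y s - phi (-s0) s0) (-s) (-s0)
  + RInt (fun y => phi y s - phi y s0 - (s - s0) * phis y s0) (-s0) s0
  + RInt (fun y => phi y s - phi s0 s0) s0 s.
Proof.
  intros Hs.
  assert (Hex : forall a b, Rabs a <= s -> Rabs b <= s -> ex_RInt (fun y => phi y s) a b)
    by (intros; apply ex_RInt_phi_slice; auto; lra).
  unfold seg_mass.
  rewrite <- (RInt_Chasles_R _ (-s) (-s0) s), <- (RInt_Chasles_R _ (-s0) s0 s)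
    by (apply Hex; split_Rabs; lra).
  rewrite !RInt_minus_const, RInt_minus_minus_scal by
    first [ apply Hex; split_Rabs; lra | apply ex_RInt_phi_slice; split_Rabs; lra
          | apply ex_RInt_seg_continuous; [lra | apply cont_on_D_seg_continuous; auto] ].
  rewrite Hev by (auto; rewrite Rabs_right; lra). simpl. ring.
Qed.

Lemma abs_RInt_minus_const_le f v a b eps : a <= b -> ex_RInt f a b ->
  (forall y, a < y < b -> Rabs (f y - v) <= eps) -> Rabs (RInt (fun y => f y - v) a b) <= (b - a) * eps.
Proof.
  intros Hab Hex H. apply abs_RInt_le_open; auto.
  apply (ex_RInt_minus (V := R_NormedModule)); [auto | apply ex_RInt_const].
Qed.

(* Each end of the interval contributes [phi s0 s0] per unit of [s - s0], the
   interior the integral of [phis]. *)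
Lemma seg_mass_right_expansion eps : 0 < eps -> exists d, 0 < d /\ forall s, s0 < s < s0 + d ->
  Rabs (seg_mass phi s - seg_mass phi s0
        - (s - s0) * (2 * phi s0 s0 + RInt (fun y => phis y s0) (-s0) s0))
    <= (s - s0) * (eps * (2 + 2 * s0)).
Proof.
  intros He.
  destruct (cont_on_D_eps_delta phi s0 s0 Hc) with (eps := eps) as [d1 [Hd1 H1]];
    [split; simpl; auto; rewrite Rabs_right; lra | auto |].
  destruct (cont_on_D_eps_delta phi (-s0) s0 Hc) with (eps := eps) as [d2 [Hd2 H2]];
    [split; simpl; auto; rewrite Rabs_Ropp, Rabs_right; lra | auto |].
  destruct (cont_on_D_uniform phis s0 Hcs Hs0 eps He) as [d3 [Hd3 H3]].
  destruct (Rmin3_spec d1 d2 d3 Hd1 Hd2 Hd3) as [Hd [Hm1 [Hm2 Hm3]]].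
  exists (Rmin d1 (Rmin d2 d3)). split; auto. intros s Hs.
  rewrite seg_mass_increment by lra.
  assert (BA : Rabs (RInt (fun y => phi y s - phi (-s0) s0) (-s) (-s0)) <= (- s0 - - s) * eps).
  { apply abs_RInt_minus_const_le; [lra | apply ex_RInt_phi_slice; split_Rabs; lra |].
    intros y Hy. left. apply H2; [split_Rabs; lra .. | split; simpl; split_Rabs; lra]. }
  assert (BC : Rabs (RInt (fun y => phi y s - phi s0 s0) s0 s) <= (s - s0) * eps).
  { apply abs_RInt_minus_const_le; [lra | apply ex_RInt_phi_slice; split_Rabs; lra |].
    intros y Hy. left. apply H1; [split_Rabs; lra .. | split; simpl; split_Rabs; lra]. }
  assert (BB := abs_RInt_phi_taylor_le s eps ltac:(lra) ltac:(intros y r Hy Hr; apply H3; lra)).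
  eapply Rle_trans; [apply Rabs_triang|]. eapply Rle_trans; [apply Rplus_le_compat_r, Rabs_triang|].
  nra.
Qed.

Lemma seg_mass_right_derivative_0 :
  (forall d, 0 < d -> exists s, s0 < s < s0 + d /\ seg_mass phi s = seg_mass phi s0) ->
  2 * phi s0 s0 + RInt (fun y => phis y s0) (-s0) s0 = 0.
Proof.
  intros Hseq. apply (eq0_of_arbitrarily_small _ (2 + 2 * s0)). intros eps He.
  destruct (seg_mass_right_expansion eps He) as [d [Hd H]].
  destruct (Hseq d Hd) as [s [Hs E]]. specialize (H s Hs). rewrite E in H.
  rewrite Rminus_eq_0, Rminus_0_l, Rabs_Ropp, Rabs_mult, (Rabs_right (s - s0)) in H by lra.
  apply Rmult_le_reg_l with (s - s0); [lra|]. lra.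
Qed.

End SegMassExpansion.

(** Contact-line motion *)

Lemma in_I_nbhd a b t0 : in_I a b t0 -> exists d, 0 < d /\ forall t, Rabs (t - t0) < d -> in_I a b t.
Proof.
  intros [Ha Hb].
  assert (Hl : exists d, 0 < d /\ forall t, Rabs (t - t0) < d -> Rbar_lt a t).
  { destruct a as [a| |]; simpl in Ha; [| contradiction | exists 1; split; [lra | intros; exact I]].
    exists (t0 - a). split; [lra|]. intros t Ht. simpl. split_Rabs; lra. }
  assert (Hr : exists d, 0 < d /\ forall t, Rabs (t - t0) < d -> Rbar_lt t b).
  { destruct b as [b| |]; simpl in Hb; [| exists 1; split; [lra | intros; exact I] | contradiction].
    exists (b - t0). split; [lra|]. intros t Ht. simpl. split_Rabs; lra. }
  destruct Hl as [d1 [Hd1 H1]]. destruct Hr as [d2 [Hd2 H2]].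
  exists (Rmin d1 d2). split; [apply Rmin_pos; auto|]. intros t Ht.
  pose proof (Rmin_l d1 d2). pose proof (Rmin_r d1 d2). split; [apply H1 | apply H2]; lra.
Qed.

(* Move to the right of [t0] if [f' t0 > 0], to the left if [f' t0 < 0]. *)
Lemma ex_value_slightly_above (f : R -> R) t0 (P : R -> Prop) :
  ex_derive f t0 -> Derive f t0 <> 0 ->
  (exists dP, 0 < dP /\ forall t, Rabs (t - t0) < dP -> P t) ->
  forall d, 0 < d -> exists t, P t /\ f t0 < f t < f t0 + d.
Proof.
  intros Hex Hl [dP [HdP HP]] d Hd. set (l := Derive f t0) in Hl.
  assert (Hla : 0 < Rabs l) by (apply Rabs_pos_lt; auto).
  destruct (proj1 (is_derive_Reals f t0 l) (Derive_correct f t0 Hex) (Rabs l) Hla) as [dq Hdq].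
  destruct (continuous_eps_delta f t0 (ex_derive_continuous f t0 Hex) d Hd) as [dc [Hdc Hc]].
  destruct (Rmin3_spec dq dc dP (cond_pos dq) Hdc HdP) as [Hm [Hm1 [Hm2 Hm3]]].
  set (h := (if Rlt_dec 0 l then 1 else -1) * (Rmin dq (Rmin dc dP) / 2)).
  assert (Hh : 0 < h * l /\ Rabs h < Rmin dq (Rmin dc dP)).
  { unfold h. destruct Rlt_dec; split; try (split_Rabs; lra); nra. }
  assert (Hh0 : h <> 0) by (intros E; rewrite E in Hh; lra).
  specialize (Hdq h Hh0 ltac:(lra)).
  set (q := (f (t0 + h) - f t0) / h) in Hdq.
  assert (Hq : 0 < q * l) by (split_Rabs; nra).
  assert (Hinc : 0 < f (t0 + h) - f t0).
  { replace (f (t0 + h) - f t0) with (q * h) by (unfold q; field; auto).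
    assert (0 < (q * h) * (l * l)) by (replace ((q * h) * (l * l)) with ((q * l) * (h * l)) by ring;
      apply Rmult_lt_0_compat; lra).
    nra. }
  assert (Hth : Rabs (t0 + h - t0) = Rabs h) by (f_equal; ring).
  exists (t0 + h). split; [apply HP; lra|].
  assert (Rabs (f (t0 + h) - f t0) < d) by (apply Hc; lra).
  split_Rabs; lra.
Qed.

Lemma mass_conservation_contact_balance (a b : Rbar) xcl phi phis t0 :
  cont_on_D phi -> cont_on_D phis ->
  (forall x s, 0 < s -> Rabs x < s -> is_derive (fun r => phi x r) s (phis x s)) -> even_in_x phi ->
  (forall t, in_I a b t -> 0 < xcl t) ->
  (forall t1 t2, in_I a b t1 -> in_I a b t2 -> mass xcl phi t1 = mass xcl phi t2) ->
  in_I a b t0 -> ex_derive xcl t0 -> Derive xcl t0 <> 0 ->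
  2 * phi (xcl t0) (xcl t0) + RInt (fun y => phis y (xcl t0)) (- xcl t0) (xcl t0) = 0.
Proof.
  intros Hc Hcs Hder Hev Hpos Hmass Ht0 Hex Hxd.
  apply seg_mass_right_derivative_0; auto. intros d Hd.
  destruct (ex_value_slightly_above xcl t0 (in_I a b) Hex Hxd (in_I_nbhd a b t0 Ht0) d Hd)
    as [t [Ht Hts]].
  exists (xcl t). split; [exact Hts|].
  rewrite <- !mass_seg_mass; auto.
Qed.

Lemma flux_odd alpha gamma mu xcl phi t x : 0 < alpha -> cont_on_D phi -> even_in_x phi ->
  0 < xcl t -> Rabs x <= xcl t ->
  flux alpha gamma mu xcl phi (- x) t = - flux alpha gamma mu xcl phi x t.
Proof.
  intros Ha Hc Hev Hs Hx. destruct (hsol_compact_profile xcl phi t Hc Hs) as [Mh Hh].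
  unfold flux. rewrite Hev, (hbar_even _ _ _ _ Mh), (hbar_xxx_odd _ _ _ _ Mh); auto. ring.
Qed.

Lemma flux_boundary_difference alpha gamma mu xcl phi phis t0 : 0 < xcl t0 -> cont_on_D phis ->
  (forall x s, 0 < s -> Rabs x < s -> is_derive (fun r => phi x r) s (phis x s)) ->
  (forall x, Rabs x < xcl t0 ->
     ex_derive (fun y => flux alpha gamma mu xcl phi y t0) x /\
     Derive xcl t0 * Derive (fun r => phi x r) (xcl t0)
       + Derive (fun y => flux alpha gamma mu xcl phi y t0) x = 0) ->
  (forall x, Rabs x <= xcl t0 ->
     filterlim (fun y => flux alpha gamma mu xcl phi y t0)
       (within (fun y => Rabs y <= xcl t0) (locally x))
       (locally (flux alpha gamma mu xcl phi x t0))) ->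
  flux alpha gamma mu xcl phi (xcl t0) t0 - flux alpha gamma mu xcl phi (- xcl t0) t0
    = - Derive xcl t0 * RInt (fun y => phis y (xcl t0)) (- xcl t0) (xcl t0).
Proof.
  intros Hs Hcs Hder Hpde Hfc.
  apply (FTC_closed_seg (fun y => flux alpha gamma mu xcl phi y t0)); auto.
  - intros x Hx. destruct (Hpde x Hx) as [Hex Heq].
    assert (Ed : Derive (fun r => phi x r) (xcl t0) = phis x (xcl t0))
      by (apply is_derive_unique; apply Hder; auto).
    rewrite Ed in Heq.
    replace (- Derive xcl t0 * phis x (xcl t0))
      with (Derive (fun y => flux alpha gamma mu xcl phi y t0) x) by lra.
    apply Derive_correct. exact Hex.
  - apply cont_on_D_seg_continuous; auto.
  - apply Hfc. rewrite Rabs_right; lra.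
  - apply Hfc. rewrite Rabs_Ropp, Rabs_right; lra.
Qed.

Theorem mainTheorem3
  (alpha gamma mu : R) (a b : Rbar) (xcl : R -> R) (phi : R -> R -> R) (t0 : R) :
  0 < alpha -> 0 < gamma -> 0 < mu ->
  (forall t, in_I a b t -> 0 < xcl t) ->
  (forall t, in_I a b t -> ex_derive xcl t) ->
  C1_on_D phi -> smooth_in_x phi -> even_in_x phi ->
  (forall t1 t2, in_I a b t1 -> in_I a b t2 -> mass xcl phi t1 = mass xcl phi t2) ->
  (forall t, in_I a b t -> forall x, Rabs x < xcl t ->
     ex_derive (fun y => flux alpha gamma mu xcl phi y t) x /\
     Derive xcl t * Derive (fun r => phi x r) (xcl t)
       + Derive (fun y => flux alpha gamma mu xcl phi y t) x = 0) ->
  (forall t, in_I a b t -> forall x, Rabs x <= xcl t ->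
     filterlim (fun y => flux alpha gamma mu xcl phi y t)
       (within (fun y => Rabs y <= xcl t) (locally x))
       (locally (flux alpha gamma mu xcl phi x t))) ->
  in_I a b t0 ->
  Derive xcl t0 <> 0 ->
  phi (xcl t0) (xcl t0) <> 0 ->
  Derive xcl t0 =
    mob gamma mu (hbar alpha xcl phi (xcl t0) t0) * hbar_xxx alpha xcl phi (xcl t0) t0.
Proof.
  intros Ha _ _ Hpos Hdx HC1 _ Hev Hmass Hpde Hfc Ht0 Hxd Hphi.
  destruct HC1 as [Hc [phix [phis [_ [Hcs Hder]]]]].
  assert (Hphis : forall x s, 0 < s -> Rabs x < s -> is_derive (fun r => phi x r) s (phis x s))
    by (intros; apply Hder; auto).
  assert (Hs0 : 0 < xcl t0) by auto.
  pose proof (mass_conservation_contact_balance a b xcl phi phis t0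
                Hc Hcs Hphis Hev Hpos Hmass Ht0 (Hdx t0 Ht0) Hxd) as Hbal.
  pose proof (flux_boundary_difference alpha gamma mu xcl phi phis t0
                Hs0 Hcs Hphis (Hpde t0 Ht0) (Hfc t0 Ht0)) as Hdiff.
  rewrite (flux_odd alpha gamma mu xcl phi t0 (xcl t0)) in Hdiff by (auto; rewrite Rabs_right; lra).
  unfold flux in Hdiff.
  set (p := phi (xcl t0) (xcl t0)) in *.
  set (v := mob gamma mu (hbar alpha xcl phi (xcl t0) t0) * hbar_xxx alpha xcl phi (xcl t0) t0).
  apply (Rmult_eq_reg_l (2 * p)); [| lra].
  replace (2 * p * v) with (p * mob gamma mu (hbar alpha xcl phi (xcl t0) t0)
      * hbar_xxx alpha xcl phi (xcl t0) t0 - - (p * mob gamma mu (hbar alpha xcl phi (xcl t0) t0)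
      * hbar_xxx alpha xcl phi (xcl t0) t0)) by (unfold v; ring).
  rewrite Hdiff. nra.
Qed.
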